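(* Let $\mathbf{X}$ be a binary matrix. If the rectangle cover graph $\mathcal{G}(\mathbf{X})$ contains an odd antihole with at least $7$ vertices (as an induced subgraph), then $\mathbf{X}$ has a submatrix which, after permuting its rows and columns, equals $\mathbf{W}$ or $\overline{\mathbf{I}}_4$.
   Context: For a binary matrix $\mathbf{X}$, $\mathrm{supp}(\mathbf{X})=\{(i,j):x_{i,j}=1\}$; a submatrix is obtained by deleting rows and columns; a rectangle is a set $I\times J\subseteq\mathrm{supp}(\mathbf{X})$. The rectangle cover graph $\mathcal{G}(\mathbf{X})$ has vertex set $\mathrm{supp}(\mathbf{X})$, two vertices being adjacent iff some rectangle of $\mathbf{X}$ contains both. A hole is an induced chordless cycle of length at least $4$; an odd antihole is an induced subgraph whose complement is a hole of odd length. Let $\mathbf{C}_3$ be the $3\times 3$ binary matrix with $1$s exactly at $(1,1),(1,2),(2,2),(2,3),(3,1),(3,3)$, and $\mathbf{1}$ the all-ones column vector of length $3$. Then $\mathbf{W}=\begin{bmatrix}\mathbf{C}_3&\mathbf{1}\\ \mathbf{1}^\top&1\end{bmatrix}$ and $\overline{\mathbf{I}}_4=\begin{bmatrix}\mathbf{C}_3&\mathbf{1}\\ \mathbf{1}^\top&0\end{bmatrix}$, both in $\{0,1\}^{4\times4}$. *)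

From mathcomp Require Import all_boot all_order all_algebra.
Set Implicit Arguments. Unset Strict Implicit. Unset Printing Implicit Defensive.

(* Binary matrices are represented as 'M[bool]_(m, n); entry true = 1. *)

Section RectCover.
Variables (m n : nat) (X : 'M[bool]_(m, n)).

Definition supp : {set 'I_m * 'I_n} := [set p | X p.1 p.2].

Definition is_rectangle (I : {set 'I_m}) (J : {set 'I_n}) : bool :=
  setX I J \subset supp.

Definition rc_adj (u v : 'I_m * 'I_n) : Prop :=
  [/\ u \in supp, v \in supp, u != v &
      exists (I : {set 'I_m}) (J : {set 'I_n}),
        [/\ is_rectangle I J, u \in setX I J & v \in setX I J]].

Definition cyc_consec (k : nat) (a b : 'I_k) : bool :=
  (b == (a.+1 %% k) :> nat) || (a == (b.+1 %% k) :> nat).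

(* G(X) contains an odd antihole on k vertices: an injective family of k
   support vertices v_0,...,v_{k-1}, k odd and k >= 4 (hole length), such that
   the complement of the induced subgraph is the cycle v_0 v_1 ... v_{k-1} v_0,
   i.e. for distinct a b: v_a, v_b adjacent in G(X) iff a, b not cyclically
   consecutive. *)
Definition odd_antihole (k : nat) : Prop :=
  [/\ odd k, 4 <= k &
    exists v : 'I_k -> 'I_m * 'I_n,
      [/\ injective v, (forall a, v a \in supp) &
          forall a b : 'I_k, a != b -> (rc_adj (v a) (v b) <-> ~~ cyc_consec a b)]].

End RectCover.

Definition C3 (i j : nat) : bool :=
  [|| (i == 0) && (j == 0), (i == 0) && (j == 1), (i == 1) && (j == 1),
      (i == 1) && (j == 2), (i == 2) && (j == 0) | (i == 2) && (j == 2)].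

Definition Wmx : 'M[bool]_4 :=
  \matrix_(i < 4, j < 4)
    if (i < 3) && (j < 3) then C3 i j else true.

Definition I4bar : 'M[bool]_4 :=
  \matrix_(i < 4, j < 4)
    if (i < 3) && (j < 3) then C3 i j else if (i == 3 :> nat) && (j == 3 :> nat) then false else true.

Definition has_perm_submatrix (m n : nat) (X : 'M[bool]_(m, n)) (A : 'M[bool]_4) : Prop :=
  exists (r : 'I_4 -> 'I_m) (c : 'I_4 -> 'I_n),
    [/\ injective r, injective c & forall i j, X (r i) (c j) = A i j].

From mathcomp Require Import all_boot all_order all_algebra zify.

Set Implicit Arguments.
Unset Strict Implicit.
Unset Printing Implicit Defensive.

(* Write v_t = (r_t, c_t) for the antihole vertices, indices taken mod k.
   Non-consecutive vertices are adjacent in G(X), so X r_a c_b = 1 whenever a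
   and b are not cyclically consecutive. Consecutive vertices are not adjacent,
   and a 2x2 block of ones would be a common rectangle, so for every t one of
   X r_t c_(t+1), X r_(t+1) c_t is 0. Since k is odd these zeros cannot
   alternate sides all around the cycle: two consecutive ones lie on the same
   side, e.g. X r_i c_(i+1) = X r_(i+1) c_(i+2) = 0. Adding a zero between
   v_(i+4) and v_(i+5), which for k >= 7 are non-consecutive to v_i, v_(i+1),
   v_(i+2), gives a copy of C3 bordered by ones: W or Ibar_4. *)

Lemma Wmx_I4bar_rows_inj (A : 'M[bool]_4) :
  A \in [:: Wmx; I4bar] -> injective (fun i => row i A).
Proof.
move=> A_WI i i' /rowP eqA; have := eqA ord0; have := eqA (inord 1).
have := eqA (inord 2); have := eqA (inord 3); clear eqA; rewrite !mxE.
by move: A_WI; rewrite !inE => /orP[]/eqP->; rewrite !mxE ?inordK //;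
  case: i i' => [[|[|[|[|?]]]] ?] [[|[|[|[|?]]]] ?] //= *; apply: val_inj.
Qed.

Lemma Wmx_I4bar_cols_inj (A : 'M[bool]_4) :
  A \in [:: Wmx; I4bar] -> injective (fun j => col j A).
Proof.
move=> A_WI j j' /colP eqA; have := eqA ord0; have := eqA (inord 1).
have := eqA (inord 2); have := eqA (inord 3); clear eqA; rewrite !mxE.
by move: A_WI; rewrite !inE => /orP[]/eqP->; rewrite !mxE ?inordK //;
  case: j j' => [[|[|[|[|?]]]] ?] [[|[|[|[|?]]]] ?] //= *; apply: val_inj.
Qed.

Section PermSubmatrix.
Variables (m n : nat) (X : 'M[bool]_(m, n)).

Lemma perm_submatrix_of_entries (A : 'M[bool]_4) (r : 'I_4 -> 'I_m) (c : 'I_4 -> 'I_n) :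
  injective (fun i => row i A) -> injective (fun j => col j A) ->
  (forall i j, X (r i) (c j) = A i j) -> has_perm_submatrix X A.
Proof.
move=> rowsA colsA XA; exists r, c; split => //.
- by move=> i i' eq_r; apply: rowsA; apply/rowP => j; rewrite !mxE -!XA eq_r.
- by move=> j j' eq_c; apply: colsA; apply/colP => i; rewrite !mxE -!XA eq_c.
Qed.

(* Rows p0 p1 p2 against columns q1 q2 q0 form C3; the entry X p3 q3 decides
   between W and Ibar_4. *)
Lemma C3_pattern_perm_submatrix (p0 p1 p2 p3 : 'I_m) (q0 q1 q2 q3 : 'I_n) :
  ~~ X p0 q0 -> ~~ X p1 q1 -> ~~ X p2 q2 ->
  X p0 q1 -> X p0 q2 -> X p1 q0 -> X p1 q2 -> X p2 q0 -> X p2 q1 ->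
  X p3 q0 -> X p3 q1 -> X p3 q2 -> X p0 q3 -> X p1 q3 -> X p2 q3 ->
  has_perm_submatrix X Wmx \/ has_perm_submatrix X I4bar.
Proof.
move=> /negbTE h00 /negbTE h11 /negbTE h22.
move=> h01 h02 h10 h12 h20 h21 h30 h31 h32 h03 h13 h23.
pose r (i : 'I_4) := match val i with 0 => p0 | 1 => p1 | 2 => p2 | _ => p3 end.
pose c (j : 'I_4) := match val j with 0 => q1 | 1 => q2 | 2 => q0 | _ => q3 end.
have entries (A : 'M[bool]_4) : A \in [:: Wmx; I4bar] ->
    X p3 q3 = A (inord 3) (inord 3) -> forall i j, X (r i) (c j) = A i j.
  rewrite !inE => /orP[]/eqP-> h33 [[|[|[|[|?]]]] ?] [[|[|[|[|?]]]] ?] //=;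
  by rewrite mxE //= ?h00 ?h11 ?h22 ?h01 ?h02 ?h10 ?h12 ?h20 ?h21 ?h30 ?h31 ?h32
             ?h03 ?h13 ?h23 // h33 mxE inordK.
have perm_sub (A : 'M[bool]_4) : A \in [:: Wmx; I4bar] ->
    X p3 q3 = A (inord 3) (inord 3) -> has_perm_submatrix X A.
  move=> A_WI h33; apply: (perm_submatrix_of_entries (r := r) (c := c)).
  - exact: Wmx_I4bar_rows_inj.
  - exact: Wmx_I4bar_cols_inj.
  - exact: entries.
case h33: (X p3 q3); [left | right]; apply: perm_sub;
  by rewrite ?inE ?eqxx ?orbT // mxE inordK.
Qed.

End PermSubmatrix.

Lemma eqn_mod_addn_gap k m d : 0 < d < k -> (m + d == m %[mod k]) = false.
Proof.
move=> /andP[d_gt0 d_lt]; rewrite -{2}[m]addn0 eqn_modDl mod0n modn_small //.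
by apply/negbTE; rewrite -lt0n.
Qed.

Section CyclicIndices.
Variables (k : nat) (k_gt0 : 0 < k).

Definition ord_mod (t : nat) : 'I_k := Ordinal (ltn_pmod t k_gt0).

Lemma ord_mod_addn t : ord_mod (t + k) = ord_mod t.
Proof. by apply: val_inj; rewrite /= modnDr. Qed.

Lemma cyc_consec_ord_mod u w :
  cyc_consec (ord_mod u) (ord_mod w) = (w == u.+1 %[mod k]) || (u == w.+1 %[mod k]).
Proof.
have modSm a : (a %% k).+1 %% k = a.+1 %% k by rewrite -addn1 modnDml addn1.
by rewrite /cyc_consec /= !modSm.
Qed.

Lemma ord_mod_succ u : 1 < k ->
  ord_mod u != ord_mod u.+1 /\ cyc_consec (ord_mod u) (ord_mod u.+1).
Proof.
move=> k_gt1; rewrite cyc_consec_ord_mod eqxx -val_eqE /=; split => //.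
by rewrite eq_sym -addn1 eqn_mod_addn_gap.
Qed.

Lemma ord_mod_far u w : u + 2 <= w -> w + 2 <= u + k ->
  ord_mod u != ord_mod w /\ ~~ cyc_consec (ord_mod u) (ord_mod w).
Proof.
move=> uw wu; rewrite cyc_consec_ord_mod -val_eqE /=.
have -> : w = u + (w - u) by lia.
rewrite eq_sym eqn_mod_addn_gap; last by lia.
have -> : u + (w - u) = u.+1 + (w - u).-1 by lia.
rewrite eqn_mod_addn_gap; last by lia.
rewrite -(modnDr u k).
have -> : u + k = (u.+1 + (w - u).-1).+1 + (k + u - w).-1 by lia.
by rewrite eqn_mod_addn_gap //; lia.
Qed.

End CyclicIndices.

Lemma odd_period_consecutive (f g : nat -> bool) k :
  odd k -> f k = f 0 -> (forall i, f i || g i) ->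
  exists i, (f i && f i.+1) || (g i && g i.+1).
Proof.
move=> k_odd f_per fg.
case: (boolP [exists i : 'I_k, (f i && f i.+1) || (g i && g i.+1)]).
  by case/existsP=> i; exists i.
rewrite negb_exists => /forallP none.
have f_alt i : i < k -> f i.+1 = ~~ f i.
  move=> lt_ik; have /= := none (Ordinal lt_ik); have := fg i; have := fg i.+1.
  by case: (f i); case: (f i.+1); case: (g i); case: (g i.+1).
have f_par i : i <= k -> f i = f 0 (+) odd i.
  elim: i => [|i IHi] lt_ik; first by rewrite addbF.
  by rewrite f_alt // IHi 1?ltnW //= addbN.
by move: (f_par k (leqnn k)); rewrite f_per k_odd; case: (f 0).
Qed.

Section RectangleCoverAdjacency.
Variables (m n : nat) (X : 'M[bool]_(m, n)).

Lemma rc_adj_cross u w : rc_adj X u w -> X u.1 w.2.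
Proof.
case=> _ _ _ [I [J [rectIJ uIJ wIJ]]].
have : (u.1, w.2) \in supp X.
  apply: (subsetP rectIJ); move: uIJ wIJ; rewrite !inE /=.
  by move=> /andP[-> _] /andP[_ ->].
by rewrite inE.
Qed.

Lemma rc_adj_of_cross u w : u \in supp X -> w \in supp X -> u != w ->
  X u.1 w.2 -> X w.1 u.2 -> rc_adj X u w.
Proof.
move=> u_supp w_supp uw uw_cross wu_cross; split=> //.
exists [set u.1; w.1], [set u.2; w.2]; split; last 2 first.
- by rewrite !inE !eqxx.
- by rewrite !inE !eqxx !orbT.
move: u_supp w_supp; rewrite !inE => u_supp w_supp.
by apply/subsetP => -[x y]; rewrite !inE /= => /andP[] /orP[]/eqP-> /orP[]/eqP->.
Qed.

End RectangleCoverAdjacency.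

Section OddAntihole.
Variables (m n : nat) (X : 'M[bool]_(m, n)) (k : nat).
Hypotheses (k_odd : odd k) (k_ge7 : 7 <= k).
Variable v : 'I_k -> 'I_m * 'I_n.
Hypotheses (v_inj : injective v) (v_supp : forall a, v a \in supp X).
Hypothesis v_adj : forall a b, a != b -> (rc_adj X (v a) (v b) <-> ~~ cyc_consec a b).

Let k_gt0 : 0 < k := leq_trans (isT : 0 < 7) k_ge7.

Let vr t := (v (ord_mod k_gt0 t)).1.
Let vc t := (v (ord_mod k_gt0 t)).2.

Lemma antihole_diag t : X (vr t) (vc t).
Proof. by have := v_supp (ord_mod k_gt0 t); rewrite inE. Qed.

Lemma antihole_far u w : u + 2 <= w -> w + 2 <= u + k ->
  X (vr u) (vc w) && X (vr w) (vc u).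
Proof.
move=> uw wu; have [neq_uw not_consec] := ord_mod_far k_gt0 uw wu.
have cross a b : a != b -> ~~ cyc_consec a b -> X (v a).1 (v b).2.
  by move=> ab /(v_adj ab).2 /rc_adj_cross.
apply/andP; split; apply: cross => //; first by rewrite eq_sym.
by rewrite /cyc_consec orbC.
Qed.

Lemma antihole_succ u : ~~ X (vr u) (vc u.+1) || ~~ X (vr u.+1) (vc u).
Proof.
have k_gt1 : 1 < k by apply: leq_trans k_ge7.
have [neq_u consec] := ord_mod_succ k_gt0 u k_gt1.
rewrite -negb_and; apply/negP => /andP[cross1 cross2].
have /(v_adj neq_u).1 := rc_adj_of_cross (v_supp _) (v_supp _)
  (contra_neq (@v_inj _ _) neq_u) cross1 cross2.
by rewrite consec.
Qed.

Lemma antihole_consecutive_zeros : exists i,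
  (~~ X (vr i) (vc i.+1) && ~~ X (vr i.+1) (vc i.+2)) ||
  (~~ X (vr i.+1) (vc i) && ~~ X (vr i.+2) (vc i.+1)).
Proof.
apply: (odd_period_consecutive (f := fun i => ~~ X (vr i) (vc i.+1))
                               (g := fun i => ~~ X (vr i.+1) (vc i)) (k := k)) => //.
  by rewrite /vr /vc -(ord_mod_addn k_gt0 0) -(ord_mod_addn k_gt0 1).
exact: antihole_succ.
Qed.

Lemma antihole_perm_submatrix i a0 a1 b0 b1 :
  all (fun t => i <= t <= i.+2) [:: a0; a1; b0; b1] ->
  ~~ X (vr a0) (vc b0) -> ~~ X (vr a1) (vc b1) ->
  X (vr a0) (vc b1) -> X (vr a1) (vc b0) ->
  has_perm_submatrix X Wmx \/ has_perm_submatrix X I4bar.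
Proof.
move=> /and5P[ha0 ha1 hb0 hb1 _] z00 z11 x01 x10.
have far t y : i <= t <= i.+2 -> y \in [:: i + 4; i + 5] ->
    X (vr t) (vc y) && X (vr y) (vc t).
  by move=> /andP[it ti]; rewrite !inE => /orP[]/eqP->; apply: antihole_far; lia.
suff from_zero p q : p \in [:: i + 4; i + 5] -> q \in [:: i + 4; i + 5] ->
    ~~ X (vr p) (vc q) -> has_perm_submatrix X Wmx \/ has_perm_submatrix X I4bar.
  by case/orP: (antihole_succ (i + 4)); rewrite -addnS;
    apply: from_zero; rewrite !inE eqxx ?orbT.
move=> hp hq zpq.
move: (far _ _ ha0 hp) (far _ _ ha0 hq) (far _ _ ha1 hp) (far _ _ ha1 hq)
      (far _ _ hb0 hp) (far _ _ hb0 hq) (far _ _ hb1 hp) (far _ _ hb1 hq).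
move=> /andP[? _] /andP[? _] /andP[? _] /andP[? _].
move=> /andP[_ ?] /andP[_ ?] /andP[_ ?] /andP[_ ?].
apply: (@C3_pattern_perm_submatrix _ _ X (vr a0) (vr a1) (vr p) (vr q)
          (vc b0) (vc b1) (vc q) (vc p)) => //; exact: antihole_diag.
Qed.

Lemma antihole_W_or_I4bar : has_perm_submatrix X Wmx \/ has_perm_submatrix X I4bar.
Proof.
have [i /orP[]/andP[z0 z1]] := antihole_consecutive_zeros;
  have /andP[far1 far2] : X (vr i) (vc i.+2) && X (vr i.+2) (vc i)
    by apply: antihole_far; lia.
- apply: (antihole_perm_submatrix (i := i) _ z0 z1 far1 (antihole_diag _)).
  by rewrite /=; lia.
- apply: (antihole_perm_submatrix (i := i) _ z0 z1 (antihole_diag _) far2).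
  by rewrite /=; lia.
Qed.

End OddAntihole.

Theorem lemma4 (m n : nat) (X : 'M[bool]_(m, n)) :
  (exists k : nat, 7 <= k /\ odd_antihole X k) ->
  has_perm_submatrix X Wmx \/ has_perm_submatrix X I4bar.
Proof.
move=> [k [k_ge7 [k_odd _ [v [v_inj v_supp v_adj]]]]].
exact: (antihole_W_or_I4bar k_odd k_ge7 v_inj v_supp v_adj).
Qed.
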